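(* Assume (A1)–(A4) and the latent index model (LI) below. Then $h_\ell(u)\ge0$ for all $\ell=1,\dots,L$ and all $u\in[0,1]$.
   Context: Observe i.i.d. $(Y_i,D_i,\mathbf Z_i)$, $D_i\in\{0,1\}$, $\mathbf Z_i=(Z_{1i},\dots,Z_{Li})'\in\{0,1\}^L$, $L\ge2$; potential outcomes $Y_i(0),Y_i(1)$ and compliance type $D_i(\cdot):\{0,1\}^L\to\{0,1\}$ with $D_i=D_i(\mathbf Z_i)$. $p_\ell=P(Z_{\ell i}=1)$, $\pi_\ell=\mathbb E[D_i\mid Z_{\ell i}=1]-\mathbb E[D_i\mid Z_{\ell i}=0]$, $\Sigma_Z=\mathrm{Var}(\mathbf Z_i)$; $Z_{-\ell}$ is the vector of instruments other than $Z_\ell$. (LI): $D_i=\mathbf 1\{V(\mathbf Z_i)\ge U_i\}$ with $V$ measurable and $U_i\sim\mathrm{Uniform}(0,1)$ conditional on potential outcomes; $p(z)=P(D_i=1\mid\mathbf Z_i=z)=V(z)$ and $$h_\ell(u)=\frac{P(p(\mathbf Z_i)\ge u\mid Z_{\ell i}=1)-P(p(\mathbf Z_i)\ge u\mid Z_{\ell i}=0)}{\mathbb E[p(\mathbf Z_i)\mid Z_{\ell i}=1]-\mathbb E[p(\mathbf Z_i)\mid Z_{\ell i}=0]}.$$ Assumptions: (A1) $(Y_i(0),Y_i(1),D_i(\cdot))$ independent of $\mathbf Z_i$. (A2) $D_i(z)$ nondecreasing in each coordinate for every $i$. (A3) $p_\ell>0$, $\pi_\ell>0$ for all $\ell$;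 $\Sigma_Z$ positive definite. (A4) For each $\ell$, $\mathbb E[f(Z_{-\ell})\mid Z_\ell=1]\ge\mathbb E[f(Z_{-\ell})\mid Z_\ell=0]$ for every nondecreasing $f:\{0,1\}^{L-1}\to\mathbb R$. *)

From HB Require Import structures.
From mathcomp Require Import all_boot all_order all_algebra.
From mathcomp Require Import all_classical all_reals all_analysis.
Set Implicit Arguments. Unset Strict Implicit. Unset Printing Implicit Defensive.
Import Order.TTheory GRing.Theory Num.Theory.
Local Open Scope classical_set_scope.
Local Open Scope ring_scope.

Definition zvec (L : nat) := {ffun 'I_L -> bool}.
Definition ctype (L : nat) := {ffun zvec L -> bool}.

Definition vle (n : nat) (z z' : {ffun 'I_n -> bool}) : Prop :=
  forall k, (z k ==> z' k).

Definition zminus (L : nat) (l : 'I_L) (z : zvec L) : {ffun 'I_L.-1 -> bool} :=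
  [ffun k => z (lift l k)].

Section Defs.
Context (R : realType) (d : measure_display) (Omega : measurableType d)
        (P : probability Omega R).

Definition pr (A : set Omega) : R := fine (P A).

Definition cprob (A B : set Omega) : R := pr (A `&` B) / pr B.

Definition condEZ (L : nat) (Z : Omega -> zvec L) (g : zvec L -> R)
    (B : set Omega) : R :=
  \sum_(z : zvec L) g z * cprob (Z @^-1` [set z]) B.

Definition Zis (L : nat) (Z : Omega -> zvec L) (l : 'I_L) (b : bool) : set Omega :=
  [set w | Z w l = b].

Definition Dobs (L : nat) (Z : Omega -> zvec L) (Dt : Omega -> ctype L) : set Omega :=
  [set w | Dt w (Z w)].

Definition pscore (L : nat) (Z : Omega -> zvec L) (Dt : Omega -> ctype L)
    (z : zvec L) : R :=
  cprob (Dobs Z Dt) (Z @^-1` [set z]).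

Definition pi_l (L : nat) (Z : Omega -> zvec L) (Dt : Omega -> ctype L) (l : 'I_L) : R :=
  cprob (Dobs Z Dt) (Zis Z l true) - cprob (Dobs Z Dt) (Zis Z l false).

(* Sigma_Z = Var(Z): Cov(Z_k, Z_j) for Bernoulli coordinates *)
Definition SigmaZ (L : nat) (Z : Omega -> zvec L) : 'M[R]_L :=
  \matrix_(k, j) (pr (Zis Z k true `&` Zis Z j true)
                  - pr (Zis Z k true) * pr (Zis Z j true)).

Definition posdef (n : nat) (M : 'M[R]_n) : Prop :=
  forall x : 'cV[R]_n, x != 0 -> 0 < (x^T *m M *m x) 0 0.

Definition h_l (L : nat) (Z : Omega -> zvec L) (Dt : Omega -> ctype L)
    (l : 'I_L) (u : R) : R :=
  let p := pscore Z Dt in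
  (cprob [set w | u <= p (Z w)] (Zis Z l true)
   - cprob [set w | u <= p (Z w)] (Zis Z l false))
  / (condEZ Z p (Zis Z l true) - condEZ Z p (Zis Z l false)).

End Defs.

From HB Require Import structures.
From mathcomp Require Import all_boot all_order all_algebra.
From mathcomp Require Import all_classical all_reals all_analysis.
Import Order.TTheory GRing.Theory Num.Theory.
Local Open Scope classical_set_scope.
Local Open Scope ring_scope.
Set Implicit Arguments. Unset Strict Implicit.

(* Under (A1), P(D = 1 | Z = z) = P(D(z) = 1) whenever P(Z = z) > 0, and
   z |-> P(D(z) = 1) is nondecreasing by (A2); hence 1{u <= p(Z)} and p(Z) are
   nondecreasing functions g(Z).  For such g, applying (A4) to g(0, .) gives
     E[g(Z) | Z_l = 1] = E[g(1, Z_-l) | Z_l = 1] >= E[g(0, Z_-l) | Z_l = 1]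
                      >= E[g(0, Z_-l) | Z_l = 0] = E[g(Z) | Z_l = 0],
   so the numerator and the denominator of h_l(u) are both nonnegative (a
   vanishing denominator gives h_l(u) = 0 since x / 0 = 0).  Neither the latent
   index structure (LI) nor (A3) is needed. *)

Definition zinsert (L : nat) (l : 'I_L) (b : bool)
    (x : {ffun 'I_L.-1 -> bool}) : zvec L :=
  [ffun k => if unlift l k is Some j then x j else b].

Lemma zinsert_zminus (L : nat) (l : 'I_L) (z : zvec L) :
  zinsert l (z l) (zminus l z) = z.
Proof.
by apply/ffunP => k; rewrite ffunE; case: unliftP => [j ->|->]; rewrite ?ffunE.
Qed.

Lemma vle_zinsert (L : nat) (l : 'I_L) (b b' : bool)
    (x y : {ffun 'I_L.-1 -> bool}) :
  (b ==> b') -> vle x y -> vle (zinsert l b x) (zinsert l b' y).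
Proof. by move=> bb' xy k; rewrite !ffunE; case: unlift. Qed.

Section Probability.
Context (R : realType) (d : measure_display) (Omega : measurableType d)
        (P : probability Omega R).

Lemma pr_ge0 (A : set Omega) : 0 <= pr P A.
Proof. exact/fine_ge0/measure_ge0. Qed.

Lemma le_pr (A B : set Omega) : measurable A -> measurable B -> A `<=` B ->
  pr P A <= pr P B.
Proof.
move=> mA mB AB.
by apply: fine_le; rewrite ?fin_num_measure//; apply: le_measure; rewrite ?inE.
Qed.

Lemma cprob_ge0 (A B : set Omega) : 0 <= cprob P A B.
Proof. by rewrite divr_ge0 ?pr_ge0. Qed.

Lemma pr_total (T : finType) (X : Omega -> T) (C : set Omega) :
  (forall t, measurable (X @^-1` [set t])) -> measurable C ->
  pr P C = \sum_(t : T) pr P (X @^-1` [set t] `&` C).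
Proof.
move=> mX mC.
have mXC t : measurable (X @^-1` [set t] `&` C) by apply: measurableI.
rewrite {1}(_ : C = \bigcup_(t in [set: T]) (X @^-1` [set t] `&` C));
  last first.
  by apply/seteqP; split=> [w Cw|w [t _ []//]]; exists (X w).
rewrite /pr measure_fin_bigcup//; first last.
- by move=> t s _ _ [w [[/= <- _] [/= -> _]]].
- exact: finite_finset.
rewrite (fsbigE (enum T)) ?enum_uniq//; last by move=> t _; rewrite mem_enum.
rewrite -sum_fine; last by move=> t _; rewrite fin_num_measure.
by rewrite big_enum_cond /=; apply: eq_bigl => t; rewrite in_setT.
Qed.

Section Instruments.
Variables (L : nat) (Z : Omega -> zvec L).
Hypothesis mZ : forall B : set (zvec L), measurable (Z @^-1` B).

Lemma cprob_condEZ (S : pred (zvec L)) (C : set Omega) : measurable C ->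
  cprob P [set w | S (Z w)] C = condEZ P Z (fun z => (S z)%:R) C.
Proof.
move=> mC; rewrite /cprob (pr_total (fun z => mZ [set z])); last first.
  exact: measurableI (mZ [set z | S z]) mC.
rewrite mulr_suml; apply: eq_bigr => z _; rewrite setIA.
have [Sz|nSz] := boolP (S z).
  by rewrite mul1r (setIidl (A := Z @^-1` [set z])) // => w /= ->.
rewrite mul0r (_ : Z @^-1` [set z] `&` _ = set0) ?set0I; last first.
  by rewrite -subset0 => w [/= ->]; apply/negP.
by rewrite /pr measure0 mul0r.
Qed.

Lemma ler_condEZ (g g' : zvec L -> R) (C : set Omega) :
  (forall z, g z <= g' z) -> condEZ P Z g C <= condEZ P Z g' C.
Proof. by move=> gg'; apply: ler_sum => z _; rewrite ler_wpM2r ?cprob_ge0. Qed.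

Lemma condEZ_Zis (g : zvec L -> R) (l : 'I_L) (b : bool) :
  condEZ P Z g (Zis Z l b)
  = condEZ P Z (fun z => g (zinsert l b (zminus l z))) (Zis Z l b).
Proof.
apply: eq_bigr => z _.
have [<-|zlb] := eqVneq (z l) b; first by rewrite zinsert_zminus.
rewrite /cprob (_ : _ `&` _ = set0) ?/pr ?measure0 /= ?mul0r ?mulr0 //.
by rewrite -subset0 => w [/= Zw]; rewrite /Zis /= Zw => /eqP; apply/negP.
Qed.

Lemma condEZ_Zis_homo (g : zvec L -> R) (l : 'I_L) :
  (forall f : {ffun 'I_L.-1 -> bool} -> R,
     {homo f : x y / vle x y >-> x <= y} ->
     condEZ P Z (fun z => f (zminus l z)) (Zis Z l false)
     <= condEZ P Z (fun z => f (zminus l z)) (Zis Z l true)) ->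
  {homo g : z z' / vle z z' >-> z <= z'} ->
  condEZ P Z g (Zis Z l false) <= condEZ P Z g (Zis Z l true).
Proof.
move=> posdep g_homo; rewrite condEZ_Zis [leRHS]condEZ_Zis.
apply: le_trans (posdep (fun x => g (zinsert l false x)) _) _.
  by move=> x y xy; apply/g_homo/vle_zinsert.
by apply: ler_condEZ => z; apply/g_homo/vle_zinsert => // k; rewrite implybb.
Qed.

Section Compliance.
Variable Dt : Omega -> ctype L.
Hypothesis mDt : forall S : set (ctype L), measurable (Dt @^-1` S).
Hypothesis indep_DZ : forall (S : set (ctype L)) (B : set (zvec L)),
  P (Dt @^-1` S `&` Z @^-1` B) = (P (Dt @^-1` S) * P (Z @^-1` B))%E.

Definition takeup (z : zvec L) : R := pr P [set w | Dt w z].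

Lemma takeup_homo :
  (forall w (z z' : zvec L), vle z z' -> Dt w z ==> Dt w z') ->
  {homo takeup : z z' / vle z z' >-> z <= z'}.
Proof.
move=> Dt_homo z z' zz'.
apply: le_pr (mDt [set D : ctype L | D z]) (mDt [set D : ctype L | D z']) _.
by move=> w /=; apply/implyP/Dt_homo.
Qed.

Lemma pscore_takeup (z : zvec L) : pr P (Z @^-1` [set z]) != 0 ->
  pscore P Z Dt z = takeup z.
Proof.
move=> Zz_neq0; rewrite /pscore /cprob.
have -> : Dobs Z Dt `&` Z @^-1` [set z] = [set w | Dt w z] `&` Z @^-1` [set z].
  by apply/seteqP; split=> w [Dw /= Zw]; rewrite /Dobs /= Zw in Dw *.
rewrite /pr (indep_DZ [set D : ctype L | D z]) fineM ?fin_num_measure//.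
by rewrite mulfK.
Qed.

Lemma condEZ_pscore (g : R -> R) (C : set Omega) : measurable C ->
  condEZ P Z (fun z => g (pscore P Z Dt z)) C
  = condEZ P Z (fun z => g (takeup z)) C.
Proof.
move=> mC; apply: eq_bigr => z _.
(* Where P(Z = z) = 0 the score is a junk value, but it carries zero weight. *)
have [Zz0|/pscore_takeup -> //] := eqVneq (pr P (Z @^-1` [set z])) 0.
rewrite /cprob (_ : pr P (Z @^-1` [set z] `&` C) = 0) ?mul0r ?mulr0 //.
apply/eqP; rewrite eq_le pr_ge0 andbT -Zz0.
by apply: le_pr; [exact: measurableI | exact: mZ | apply: subIsetl].
Qed.

End Compliance.
End Instruments.
End Probability.

Theorem proposition14 (R : realType) (d : measure_display)
  (Omega : measurableType d) (P : probability Omega R) (L : nat)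
  (Y0 Y1 : Omega -> R) (Dt : Omega -> ctype L) (Z : Omega -> zvec L)
  (V : zvec L -> R) (U : Omega -> R) :
  (2 <= L)%N ->
  (* measurability of the random elements *)
  measurable_fun setT Y0 -> measurable_fun setT Y1 -> measurable_fun setT U ->
  (forall S : set (ctype L), measurable (Dt @^-1` S)) ->
  (forall B : set (zvec L), measurable (Z @^-1` B)) ->
  (* (A1) (Y(0), Y(1), D(.)) independent of Z *)
  (forall (A0 A1 : set R) (S : set (ctype L)) (B : set (zvec L)),
     measurable A0 -> measurable A1 ->
     P (Y0 @^-1` A0 `&` Y1 @^-1` A1 `&` Dt @^-1` S `&` Z @^-1` B)
     = (P (Y0 @^-1` A0 `&` Y1 @^-1` A1 `&` Dt @^-1` S) * P (Z @^-1` B))%E) ->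
  (* (A2) monotonicity of every compliance type *)
  (forall w (z z' : zvec L), vle z z' -> Dt w z ==> Dt w z') ->
  (* (A3) *)
  (forall l : 'I_L, 0 < pr P (Zis Z l true)) ->
  (forall l : 'I_L, 0 < pi_l P Z Dt l) ->
  posdef (SigmaZ P Z) ->
  (* (A4) *)
  (forall (l : 'I_L) (f : {ffun 'I_L.-1 -> bool} -> R),
     (forall x y, vle x y -> f x <= f y) ->
     condEZ P Z (fun z => f (zminus l z)) (Zis Z l true)
     >= condEZ P Z (fun z => f (zminus l z)) (Zis Z l false)) ->
  (* (LI) latent index model *)
  (forall w (z : zvec L), Dt w z = (U w <= V z)) ->
  (* U ~ Uniform(0,1) conditional on the potential outcomes *)
  (forall (A0 A1 : set R) (t : R), measurable A0 -> measurable A1 ->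
     0 <= t <= 1 ->
     P (Y0 @^-1` A0 `&` Y1 @^-1` A1 `&` U @^-1` `]-oo, t])
     = (t%:E * P (Y0 @^-1` A0 `&` Y1 @^-1` A1))%E) ->
  forall (l : 'I_L) (u : R), 0 <= u <= 1 -> 0 <= h_l P Z Dt l u.
Proof.
move=> _ _ _ _ mDt mZ A1 Dt_homo _ _ _ posdep _ _ l u _.
have indep_DZ S B :
    P (Dt @^-1` S `&` Z @^-1` B) = (P (Dt @^-1` S) * P (Z @^-1` B))%E.
  have := A1 setT setT S B measurableT measurableT.
  by rewrite !preimage_setT !setTI.
have mZl b : measurable (Zis Z l b) := mZ [set z | z l = b].
have takeup_homo := takeup_homo P mDt Dt_homo.
rewrite /h_l divr_ge0 // subr_ge0.
  rewrite !(cprob_condEZ P mZ (fun z => u <= pscore P Z Dt z)) //.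
  rewrite !(condEZ_pscore mZ mDt indep_DZ (fun p => ((u <= p)%R)%:R)) //.
  apply: condEZ_Zis_homo (posdep l) _ => z z' /takeup_homo zz'.
  by rewrite ler_nat; case: leP => // /le_trans/(_ zz') ->.
rewrite !(condEZ_pscore mZ mDt indep_DZ id) //.
exact: condEZ_Zis_homo (posdep l) takeup_homo.
Qed.
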